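(* Let $K\ge 1$ be an integer, $T\ge 1$, and $\eta\in(0,1/2]$. Let $f^1,\dots,f^T$ be classifiers (e.g. the iterates produced by the worst-class adversarial training algorithm described in the context), and for each $k\in\{0,1,\dots,K\}$ and $t\in\{1,\dots,T\}$ let $L^{val}_k(f^t)\in[0,1]$. Define the weights $$w^{t}_{k}=\frac{\exp\left(\sum_{i=1}^{t-1}\eta\, L^{val}_{k}(f^i)\right)}{\sum_{j=0}^{K}\exp\left(\sum_{i=1}^{t-1}\eta\, L^{val}_{j}(f^i)\right)},\qquad k=0,\dots,K,\ t=1,\dots,T$$ (so $w^1_k=1/(K+1)$). Assume that for every $k\in\{0,\dots,K\}$, $$\frac{1}{T}\sum_{t=1}^{T}L^{val}_{k}(f^{t})\ \ge\ \frac{1}{1-\eta}\min_{1\le t\le T}L^{val}_{k}(f^{t}).$$ Then $$\max_{0\le k\le K}\ \min_{1\le t\le T}L^{val}_{k}(f^{t})\ \le\ \frac{1}{T}\sum_{t=1}^{T}\sum_{k=0}^{K}w^{t}_{k}\,L^{val}_{k}(f^{t})+\frac{\log(K+1)}{T\eta}.$$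
   Context: Setting: $K$-class classification with labels $\{1,\dots,K\}$. For a classifier $f$, $L^{val}_0(f)$ denotes its average loss on a validation set and $L^{val}_k(f)$ ($1\le k\le K$) its average loss on the validation examples of class $k$ (the loss used is the TRADES adversarial loss). The worst-class adversarial training algorithm initializes $f^0$ and, for $t=1,\dots,T$, sets $f^t=f^{t-1}-\lambda\sum_{k=0}^K w^t_k\,\partial L^{tr}_k(f^{t-1})/\partial f$, where $L^{tr}_0$ is the overall training loss and $L^{tr}_k$ the class-$k$ training loss, $\lambda>0$ a learning rate, and $w^t_k$ are the exponential (Hedge) weights given in the claim, computed from past validation losses. *)

From Stdlib Require Import Reals Lra Lia.
Open Scope R_scope.

Fixpoint sumR (a n : nat) (g : nat -> R) : R :=
  match n with
  | O => 0
  | S n' => sumR a n' g + g (a + n')%nat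
  end.

(* minR a n g = min_{a <= i <= a+n} g i   (n+1 terms, nonempty) *)
Fixpoint minR (a n : nat) (g : nat -> R) : R :=
  match n with
  | O => g a
  | S n' => Rmin (minR a n' g) (g (a + n)%nat)
  end.

(* maxR a n g = max_{a <= i <= a+n} g i   (n+1 terms, nonempty) *)
Fixpoint maxR (a n : nat) (g : nat -> R) : R :=
  match n with
  | O => g a
  | S n' => Rmax (maxR a n' g) (g (a + n)%nat)
  end.

Definition hedge_weight {F : Type} (K : nat) (eta : R) (Lval : nat -> F -> R)
  (f : nat -> F) (t k : nat) : R :=
  exp (sumR 1 (t - 1) (fun i => eta * Lval k (f i))) /
  sumR 0 (K + 1) (fun j => exp (sumR 1 (t - 1) (fun i => eta * Lval j (f i)))).

(* With Phi_n = sum_j exp (eta * cumulative loss of j after n rounds),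
   convexity of exp gives Phi_(n+1) <= Phi_n * exp ((e^eta - 1) * mixture loss of round n+1),
   and Phi_0 = K+1, while Phi_T >= exp (eta * L_k) for every k.  Hence
   eta * L_k <= ln (K+1) + (e^eta - 1) * (total mixture loss).
   Since (e^eta - 1)(1 - eta) <= eta, this becomes
   (1 - eta) L_k <= ln (K+1) / eta + (total mixture loss),
   and the hypothesis bounds min_t L_k(f^t) by (1 - eta) L_k / T. *)

From Stdlib Require Import Reals Lra Lia.
Open Scope R_scope.

Lemma sumR_ext a n g h : (forall i, (a <= i < a + n)%nat -> g i = h i) ->
  sumR a n g = sumR a n h.
Proof.
  induction n as [|n IH]; simpl; intros Hgh; [reflexivity|].
  rewrite IH, Hgh by (intros; try apply Hgh; lia). reflexivity.
Qed.

Lemma sumR_le a n g h : (forall i, (a <= i < a + n)%nat -> g i <= h i) ->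
  sumR a n g <= sumR a n h.
Proof.
  induction n as [|n IH]; simpl; intros Hgh; [lra|].
  apply Rplus_le_compat; [apply IH; intros; apply Hgh | apply Hgh]; lia.
Qed.

Lemma sumR_const a n c : sumR a n (fun _ => c) = INR n * c.
Proof. induction n as [|n IH]; simpl sumR; [simpl; ring|]. rewrite IH, S_INR. ring. Qed.

Lemma sumR_ge0 a n g : (forall i, (a <= i < a + n)%nat -> 0 <= g i) -> 0 <= sumR a n g.
Proof.
  intros Hg. replace 0 with (sumR a n (fun _ => 0)) by (rewrite sumR_const; ring).
  now apply sumR_le.
Qed.

Lemma sumR_add a n g h : sumR a n (fun i => g i + h i) = sumR a n g + sumR a n h.
Proof. induction n as [|n IH]; simpl; [ring|]. rewrite IH. ring. Qed.

Lemma sumR_scal a n c g : sumR a n (fun i => c * g i) = c * sumR a n g.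
Proof. induction n as [|n IH]; simpl; [ring|]. rewrite IH. ring. Qed.

Lemma le_sumR_term a n g j : (forall i, (a <= i < a + n)%nat -> 0 <= g i) ->
  (a <= j < a + n)%nat -> g j <= sumR a n g.
Proof.
  induction n as [|n IH]; simpl; intros Hg Hj; [lia|].
  destruct (Nat.eq_dec j (a + n)) as [->|Hne].
  - assert (0 <= sumR a n g) by (apply sumR_ge0; intros; apply Hg; lia). lra.
  - assert (g j <= sumR a n g) by (apply IH; [intros; apply Hg|]; lia).
    assert (0 <= g (a + n)%nat) by (apply Hg; lia). lra.
Qed.

Lemma maxR_lub a n g B : (forall i, (a <= i <= a + n)%nat -> g i <= B) -> maxR a n g <= B.
Proof.
  induction n as [|n IH]; simpl; intros Hg.
  - apply Hg; lia.
  - apply Rmax_lub; [apply IH; intros|]; apply Hg; lia.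
Qed.

Lemma exp_le_chord eta x : 0 <= x <= 1 -> exp (eta * x) <= 1 + (exp eta - 1) * x.
Proof.
  intros Hx. set (p := eta * x).
  (* The tangent to exp at p lies below exp at 0 and at eta; average with weights 1-x, x. *)
  assert (Hat0 : exp p * (1 - p) <= 1).
  { assert (Hexp := exp_ineq1_le (- p)).
    rewrite exp_Ropp in Hexp. pose proof (exp_pos p).
    apply Rmult_le_compat_l with (r := exp p) in Hexp; [|lra].
    rewrite Rinv_r in Hexp by lra. lra. }
  assert (Hateta : exp p * (1 + (eta - p)) <= exp eta).
  { replace (exp eta) with (exp p * exp (eta - p)) by (rewrite <- exp_plus; f_equal; ring).
    apply Rmult_le_compat_l; [left; apply exp_pos | apply exp_ineq1_le]. }
  replace (exp p) with ((1 - x) * (exp p * (1 - p)) + x * (exp p * (1 + (eta - p))))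
    by (unfold p; ring).
  nra.
Qed.

Lemma exp_sub1_mul_1_sub_le eta : (exp eta - 1) * (1 - eta) <= eta.
Proof.
  assert (Hexp := exp_ineq1_le (- eta)).
  rewrite exp_Ropp in Hexp. pose proof (exp_pos eta).
  apply Rmult_le_compat_l with (r := exp eta) in Hexp; [|lra].
  rewrite Rinv_r in Hexp by lra. lra.
Qed.

Lemma ln_INR_ge0 n : (1 <= n)%nat -> 0 <= ln (INR n).
Proof.
  intros Hn. apply Rnot_lt_le. intros Hlt. apply exp_increasing in Hlt.
  rewrite exp_ln, exp_0 in Hlt by (apply lt_0_INR; lia).
  apply le_INR in Hn. simpl in Hn. lra.
Qed.

Section Hedge.

Variables (N : nat) (eta : R) (l : nat -> nat -> R).
Hypothesis HN : (1 <= N)%nat.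

Definition potential (n : nat) : R :=
  sumR 0 N (fun j => exp (sumR 1 n (fun i => eta * l j i))).

(* For l k t = Lval k (f t) and N = K + 1, the k-th weight here is exactly hedge_weight K eta Lval f t k. *)
Definition mixture_loss (t : nat) : R :=
  sumR 0 N (fun k => exp (sumR 1 (t - 1) (fun i => eta * l k i)) / potential (t - 1) * l k t).

Lemma potential_gt0 n : 0 < potential n.
Proof.
  apply Rlt_le_trans with (exp (sumR 1 n (fun i => eta * l 0%nat i))); [apply exp_pos|].
  apply (le_sumR_term 0 N (fun j => exp (sumR 1 n (fun i => eta * l j i))));
    [intros; left; apply exp_pos | lia].
Qed.

Lemma potential_0 : potential 0 = INR N.
Proof. unfold potential. simpl sumR. rewrite exp_0, sumR_const. ring. Qed.

Lemma potential_mul_mixture_loss n : potential n * mixture_loss (S n) =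
  sumR 0 N (fun k => exp (sumR 1 n (fun i => eta * l k i)) * l k (S n)).
Proof.
  unfold mixture_loss. rewrite Nat.sub_succ, Nat.sub_0_r, <- sumR_scal.
  apply sumR_ext. intros k _. field. apply Rgt_not_eq, potential_gt0.
Qed.

Variable T : nat.
Hypothesis Hl : forall j t, (j < N)%nat -> (1 <= t <= T)%nat -> 0 <= l j t <= 1.

Lemma mixture_loss_ge0 t : (1 <= t <= T)%nat -> 0 <= mixture_loss t.
Proof.
  intros Ht. apply sumR_ge0. intros k Hk. apply Rmult_le_pos; [|apply Hl; lia].
  apply Rmult_le_pos; [left; apply exp_pos | left; apply Rinv_0_lt_compat, potential_gt0].
Qed.

Lemma potential_S_le n : (n < T)%nat ->
  potential (S n) <= potential n * exp ((exp eta - 1) * mixture_loss (S n)).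
Proof.
  intros Hn. set (c := exp eta - 1).
  apply Rle_trans with
    (sumR 0 N (fun j => exp (sumR 1 n (fun i => eta * l j i)) * (1 + c * l j (S n)))).
  { apply sumR_le. intros j Hj. simpl sumR. replace (1 + n)%nat with (S n) by lia.
    rewrite exp_plus. apply Rmult_le_compat_l; [left; apply exp_pos|].
    apply exp_le_chord, Hl; lia. }
  replace (sumR 0 N (fun j => exp (sumR 1 n (fun i => eta * l j i)) * (1 + c * l j (S n))))
    with (potential n + c * (potential n * mixture_loss (S n))).
  - replace (potential n + c * (potential n * mixture_loss (S n)))
      with (potential n * (1 + c * mixture_loss (S n))) by ring.
    apply Rmult_le_compat_l; [left; apply potential_gt0 | apply exp_ineq1_le].
  - rewrite potential_mul_mixture_loss, <- sumR_scal. unfold potential.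
    rewrite <- sumR_add. apply sumR_ext. intros j _. ring.
Qed.

Lemma potential_le n : (n <= T)%nat ->
  potential n <= INR N * exp ((exp eta - 1) * sumR 1 n mixture_loss).
Proof.
  induction n as [|n IH]; intros Hn.
  - simpl sumR. rewrite potential_0, Rmult_0_r, exp_0. lra.
  - apply Rle_trans with (potential n * exp ((exp eta - 1) * mixture_loss (S n)));
      [apply potential_S_le; lia|].
    simpl sumR. replace (1 + n)%nat with (S n) by lia.
    rewrite Rmult_plus_distr_l, exp_plus, <- Rmult_assoc.
    apply Rmult_le_compat_r; [left; apply exp_pos | apply IH; lia].
Qed.

Lemma hedge_regret k : (k < N)%nat ->
  eta * sumR 1 T (l k) <= ln (INR N) + (exp eta - 1) * sumR 1 T mixture_loss.
Proof.
  intros Hk. apply Rnot_lt_le. intros Hlt. apply exp_increasing in Hlt.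
  rewrite exp_plus, exp_ln in Hlt by (apply lt_0_INR; lia).
  assert (Hpot : exp (eta * sumR 1 T (l k)) <= potential T).
  { rewrite <- sumR_scal.
    apply (le_sumR_term 0 N (fun j => exp (sumR 1 T (fun i => eta * l j i))));
      [intros; left; apply exp_pos | lia]. }
  pose proof (potential_le T (Nat.le_refl T)). lra.
Qed.

Lemma hedge_loss_bound k : (k < N)%nat -> 0 < eta <= 1 ->
  (1 - eta) * sumR 1 T (l k) <= ln (INR N) / eta + sumR 1 T mixture_loss.
Proof.
  intros Hk Heta.
  assert (Hmix : 0 <= sumR 1 T mixture_loss)
    by (apply sumR_ge0; intros; apply mixture_loss_ge0; lia).
  assert (Hc : (exp eta - 1) * (1 - eta) * sumR 1 T mixture_loss <= eta * sumR 1 T mixture_loss)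
    by (apply Rmult_le_compat_r; [exact Hmix | apply exp_sub1_mul_1_sub_le]).
  pose proof (hedge_regret k Hk) as Hreg.
  pose proof (ln_INR_ge0 N HN).
  apply Rmult_le_reg_l with eta; [lra|].
  replace (eta * (ln (INR N) / eta + sumR 1 T mixture_loss))
    with (ln (INR N) + eta * sumR 1 T mixture_loss) by (field; lra).
  apply Rmult_le_compat_l with (r := 1 - eta) in Hreg; [|lra].
  nra.
Qed.

End Hedge.

Theorem theorem1 (F : Type) (K T : nat) (eta : R)
  (f : nat -> F) (Lval : nat -> F -> R)
  (HK : (1 <= K)%nat) (HT : (1 <= T)%nat)
  (Heta0 : 0 < eta) (Heta1 : eta <= 1 / 2)
  (HL : forall k t, (k <= K)%nat -> (1 <= t <= T)%nat ->
          0 <= Lval k (f t) <= 1)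
  (Hassm : forall k, (k <= K)%nat ->
     / INR T * sumR 1 T (fun t => Lval k (f t)) >=
     / (1 - eta) * minR 1 (T - 1) (fun t => Lval k (f t))) :
  maxR 0 K (fun k => minR 1 (T - 1) (fun t => Lval k (f t))) <=
  / INR T * sumR 1 T (fun t =>
      sumR 0 (K + 1) (fun k => hedge_weight K eta Lval f t k * Lval k (f t)))
  + ln (INR (K + 1)) / (INR T * eta).
Proof.
  set (l := fun k t => Lval k (f t)).
  change (sumR 1 T (fun t => sumR 0 (K + 1) (fun k => hedge_weight K eta Lval f t k * Lval k (f t))))
    with (sumR 1 T (mixture_loss (K + 1) eta l)).
  assert (HTpos : 0 < INR T) by (apply lt_0_INR; lia).
  apply maxR_lub. intros k Hk.
  assert (Hbound := hedge_loss_bound (K + 1) eta l ltac:(lia) T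
    ltac:(intros; apply HL; lia) k ltac:(lia) ltac:(lra)).
  pose proof (Rge_le _ _ (Hassm k ltac:(lia))) as Hmin.
  apply Rmult_le_compat_l with (r := 1 - eta) in Hmin; [|lra].
  rewrite <- Rmult_assoc, Rinv_r, Rmult_1_l in Hmin by lra.
  change (fun t => Lval k (f t)) with (l k) in Hmin.
  apply Rle_trans with (1 := Hmin).
  replace (ln (INR (K + 1)) / (INR T * eta)) with (/ INR T * (ln (INR (K + 1)) / eta))
    by (field; lra).
  rewrite Rplus_comm, <- Rmult_plus_distr_l.
  replace ((1 - eta) * (/ INR T * sumR 1 T (l k))) with (/ INR T * ((1 - eta) * sumR 1 T (l k)))
    by ring.
  apply Rmult_le_compat_l; [left; apply Rinv_0_lt_compat; exact HTpos | exact Hbound].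
Qed.
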